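(* For every positive integer $t$ and every graph $G$ with $\alpha(G)\leq 2$ which does not have $K_t$ as an odd minor, we have $\chi(G)\leq \lceil \frac32(t-1)\rceil$.
   Context: All graphs are finite and simple; $\alpha(G)$ is the independence number and $\chi(G)$ the chromatic number. A graph $G$ has $K_t$ as an odd minor if there exist vertex-disjoint trees $T_1,\dots,T_t\subseteq G$ and functions $\chi_i:V(T_i)\to\{\text{black},\text{white}\}$ such that (i) for every $i$, $\chi_i$ is a proper $2$-coloring of $T_i$, and (ii) for all $i\neq j$ there are vertices $x_i\in V(T_i)$, $x_j\in V(T_j)$ with $\{x_i,x_j\}\in E(G)$ and $\chi_i(x_i)=\chi_j(x_j)$. *)

From mathcomp Require Import all_boot.
Set Implicit Arguments. Unset Strict Implicit. Unset Printing Implicit Defensive.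

Definition simple_graph (T : finType) (e : rel T) : Prop :=
  symmetric e /\ irreflexive e.

Definition independent (T : finType) (e : rel T) (S : {set T}) : bool :=
  [forall x in S, forall y in S, ~~ e x y].

Definition alpha (T : finType) (e : rel T) : nat :=
  \max_(S : {set T} | independent e S) #|S|.

Definition proper_coloring (T : finType) (e : rel T) (k : nat) (c : T -> 'I_k) : Prop :=
  forall x y, e x y -> c x != c y.

Definition colorable (T : finType) (e : rel T) (k : nat) : Prop :=
  exists c : T -> 'I_k, proper_coloring e c.

Definition colorableb (T : finType) (e : rel T) (k : nat) : bool :=
  [exists c : {ffun T -> 'I_k}, [forall x, forall y, e x y ==> (c x != c y)]].

Lemma colorableb_card (T : finType) (e : rel T) :
  irreflexive e -> exists k, colorableb e k.
Proof.
move=> irr; exists #|T|; apply/existsP.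
exists [ffun x => enum_rank x]; apply/forallP => x; apply/forallP => y.
apply/implyP => exy; rewrite !ffunE; apply/negP => /eqP/enum_rank_inj exy'.
by move: exy; rewrite exy' irr.
Qed.

(* chi(G): least k admitting a proper k-colouring (0 if e is not irreflexive,
   a case excluded by the simple-graph hypothesis). *)
Definition chi (T : finType) (e : rel T) : nat :=
  match boolP [forall x, ~~ e x x] with
  | AltTrue h => ex_minn (colorableb_card (fun x => negbTE (forallP h x)))
  | AltFalse _ => 0
  end.

(* A subgraph (V, F) of G = (T, e) that is a tree:
   F is a symmetric edge relation contained in e, with both endpoints in V,
   V is nonempty, (V, F) is connected, and it has exactly |V| - 1 edges
   (counted as ordered pairs: 2(|V|-1)). *)
Definition restr_rel (T : finType) (V : {set T}) (F : rel T) : rel T :=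
  fun x y => [&& x \in V, y \in V & F x y].

Definition is_subtree (T : finType) (e : rel T) (V : {set T}) (F : rel T) : Prop :=
  [/\ V != set0,
      symmetric F,
      (forall x y, F x y -> [/\ e x y, x \in V & y \in V]),
      (forall x y, x \in V -> y \in V -> connect (restr_rel V F) x y)
    & #|[set p : T * T | F p.1 p.2]| = 2 * (#|V| - 1)].

(* G has K_t as an odd minor: vertex-disjoint trees T_1..T_t with proper
   2-colourings (bool = black/white) such that for all i <> j there is an
   edge of G between T_i and T_j whose endpoints have the same colour. *)
Definition has_odd_minor (T : finType) (e : rel T) (t : nat) : Prop :=
  exists (V : 'I_t -> {set T}) (F : 'I_t -> rel T) (col : 'I_t -> T -> bool),
    [/\ (forall i, is_subtree e (V i) (F i)),
        (forall i j, i != j -> [disjoint V i & V j]),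
        (forall i x y, F i x y -> col i x != col i y)
      & (forall i j, i != j ->
           exists x y, [/\ x \in V i, y \in V j, e x y & col i x = col j y])].

From mathcomp Require Import all_boot zify.
Set Implicit Arguments. Unset Strict Implicit. Unset Printing Implicit Defensive.

(* Call an induced path x - z - y a cherry with centre z.  When alpha(G) <= 2
   its ends x, y are non-adjacent, so every other vertex is adjacent to x or
   to y.  Hence pairwise disjoint cherries and single vertices, the single
   vertices forming a clique, are the branch trees of an odd clique minor:
   colour each centre white and everything else black; any two members are then
   joined by an edge between black vertices.  It suffices to find, in every
   vertex set S, such a family of m members together with a proper colouring
   of S by k colours, 2k <= 3m + 1.  This goes by induction on S.  Let z have
   fewest non-neighbours in S and z' fewest among the non-neighbours of z.
   Either z is adjacent to all of S (one member, one colour); or no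
   non-neighbour of z other than z' is adjacent to a non-neighbour of z' other
   than z, so {z, z'} is a colour class and one of z, z' is adjacent to all the
   single vertices already chosen (one member, one colour); or counting
   non-neighbours yields two disjoint cherries with non-adjacent centres (two
   members, colour classes {x1, y1}, {x2, y2}, {z1, z2}), or a cherry and a
   vertex adjacent to everything outside it (two members, three colours). *)

Lemma pairwise_sym_in (X : eqType) (r : rel X) (xs : seq X) :
  symmetric r -> pairwise r xs -> {in xs &, forall x y, x != y -> r x y}.
Proof.
move=> r_sym pw x y xin yin; pose r' x y := (x == y) || r x y.
have r'_refl : reflexive r' by move=> u; rewrite /r' eqxx.
have r'_sym : symmetric r' by move=> u v; rewrite /r' eq_sym r_sym.
have : all2rel r' xs.
  by rewrite -pairwise_all2rel //; apply: sub_pairwise pw => u v ruv; rewrite /r' ruv orbT.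
by move/allrelP/(_ x y xin yin); rewrite /r' => /orP[/eqP->|//]; rewrite eqxx.
Qed.

Lemma cards3 (T : finType) (x y w : T) :
  x != y -> x != w -> y != w -> #|[set x; y; w]| = 3.
Proof. by move=> xy xw yw; rewrite setUC cardsU1 cards2 !inE xy !negb_or eq_sym xw eq_sym yw. Qed.

Lemma disjointsU (T : finType) (A B C : {set T}) :
  [disjoint A & B :|: C] = [disjoint A & B] && [disjoint A & C].
Proof. by rewrite !disjoints_subset setCU subsetI. Qed.

Lemma disjoint_setD (T : finType) (A B W : {set T}) : A \subset W -> [disjoint A & B :\: W].
Proof.
by move=> /subsetP AW; rewrite disjoints_subset; apply/subsetP=> u /AW; rewrite !inE => ->.
Qed.

Lemma leq_card_setD (T : finType) (A B : {set T}) : #|A| <= #|B| -> #|A :\: B| <= #|B :\: A|.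
Proof. by move=> AB; rewrite !cardsD setIC leq_sub2r. Qed.

Lemma sub_set3 (T : finType) (S : {set T}) x y w :
  x \in S -> y \in S -> w \in S -> [set x; y; w] \subset S.
Proof. by move=> xS yS wS; rewrite !subUset !sub1set xS yS wS. Qed.

Lemma disjoint_set3 (T : finType) (x y w : T) (A : {set T}) :
  [disjoint [set x; y; w] & A] = [&& x \notin A, y \notin A & w \notin A].
Proof. by rewrite disjoint_sym !disjointsU !(disjoint_sym A) !disjoints1 andbA. Qed.

(* [Cherry x z y] stands for the path x - z - y with centre z. *)
Inductive bag (T : Type) := Vertex of T | Cherry of T & T & T.

Section OddCliqueModels.
Variables (T : finType) (e : rel T).
Hypotheses (e_sym : symmetric e) (e_irr : irreflexive e).

Definition bag_verts (b : bag T) : {set T} :=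
  match b with Vertex v => [set v] | Cherry x z y => [set x; z; y] end.

Definition bag_edge (b : bag T) : rel T :=
  match b with
  | Vertex _ => fun _ _ => false
  | Cherry x z y => fun u w =>
      (u == z) && ((w == x) || (w == y)) || (w == z) && ((u == x) || (u == y))
  end.

Definition bag_colour (b : bag T) : T -> bool :=
  if b is Cherry _ z _ then fun u => u == z else fun _ => false.

Definition cherry (x z y : T) : bool := [&& e z x, e z y, ~~ e x y & x != y].

Definition bag_ok (b : bag T) : bool :=
  if b is Cherry x z y then cherry x z y else true.

Lemma cherry_neq x z y : cherry x z y -> [/\ x != z, y != z & x != y].
Proof.
case/and4P=> zx zy _ xy; split=> //.
  by apply: contraTneq zx => ->; rewrite e_irr.
by apply: contraTneq zy => ->; rewrite e_irr.
Qed.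

Lemma bag_tree b : bag_ok b -> is_subtree e (bag_verts b) (bag_edge b).
Proof.
case: b => [v _ | x z y xzy] /=.
  split=> //.
  - by apply/set0Pn; exists v; rewrite inE.
  - by move=> u w; rewrite !inE => /eqP-> /eqP->; apply: connect0.
  - by rewrite cards1 muln0; apply/eqP; rewrite cards_eq0; apply/eqP/setP=> p; rewrite !inE.
have [xz yz xy] := cherry_neq xzy; case/and4P: xzy => zx zy _ _.
set V := [set x; z; y]; set F := bag_edge (Cherry x z y).
have F_sym : symmetric F by move=> u w; rewrite /F /= orbC.
split=> //.
- by apply/set0Pn; exists z; rewrite !inE eqxx orbT.
- move=> u w; rewrite /F /=.
  by case/orP=> /andP[/eqP-> /orP[]/eqP->]; rewrite !inE !eqxx ?orbT // e_sym.
- have to_z u : u \in V -> connect (restr_rel V F) u z.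
    have zV : z \in V by rewrite /V !inE eqxx orbT.
    rewrite /V !inE => /orP[/orP[]|]/eqP->; rewrite ?connect0 //;
      by apply: connect1; rewrite /restr_rel zV /V !inE /F /= !eqxx ?orbT.
  have R_sym : connect_sym (restr_rel V F).
    by apply: sym_connect_sym => u w; rewrite /restr_rel F_sym andbCA.
  by move=> u w /to_z uz /to_z wz; rewrite (connect_trans uz) // R_sym.
- have -> : #|V| = 3 by rewrite cards3 // eq_sym.
  transitivity #|[:: (z, x); (x, z); (z, y); (y, z)]|; last first.
    apply/card_uniqP; rewrite /= !inE !xpair_eqE.
    by rewrite (eq_sym z x) (eq_sym z y) (negbTE xz) (negbTE yz) (negbTE xy) !andbF.
  apply: eq_card => -[u w]; rewrite !inE /F /= !xpair_eqE.
  by do !case: (_ == _).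
Qed.

Lemma bag_colour_proper b u w :
  bag_ok b -> bag_edge b u w -> bag_colour b u != bag_colour b w.
Proof.
case: b => [//|x z y] /cherry_neq[xz yz _] /=.
by case/orP=> /andP[/eqP-> /orP[]/eqP->]; rewrite eqxx ?(negbTE xz) ?(negbTE yz).
Qed.

Definition bags_compatible (b b' : bag T) : bool :=
  [disjoint bag_verts b & bag_verts b'] &&
  (match b, b' with Vertex v, Vertex w => e v w | _, _ => true end).

Lemma bags_compatibleC b b' : bags_compatible b b' = bags_compatible b' b.
Proof.
by rewrite /bags_compatible disjoint_sym; case: b b' => [v|???] [w|???] //=; rewrite e_sym.
Qed.

Definition odd_model (S : {set T}) (s : seq (bag T)) : bool :=
  [&& all bag_ok s, all (fun b => bag_verts b \subset S) s & pairwise bags_compatible s].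

Definition singles (s : seq (bag T)) : seq T :=
  pmap (fun b => if b is Vertex v then Some v else None) s.

Lemma singles_sub (S : {set T}) s : odd_model S s -> {subset singles s <= S}.
Proof.
case/and3P=> _ sub _; apply/allP; rewrite all_pmap.
by apply: sub_all sub => -[v | ? ? ?] //=; rewrite sub1set.
Qed.

Lemma singles_clique (S : {set T}) s :
  odd_model S s -> {in singles s &, forall v w, v != w -> e v w}.
Proof.
case/and3P=> _ _ compat; apply: pairwise_sym_in => //.
elim: s compat => //= -[v | ? ? ?] s IH /andP[bs /IH] //= ->; rewrite andbT all_pmap.
by apply: sub_all bs => -[w | ? ? ?] //= /andP[].
Qed.

Lemma odd_model_cons (S S' : {set T}) s b :
  odd_model S' s -> S' \subset S -> bag_ok b -> bag_verts b \subset S ->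
  [disjoint bag_verts b & S'] ->
  (if b is Vertex v then {in singles s, forall w, e v w} else True) ->
  odd_model S (b :: s).
Proof.
move=> /and3P[ok sub compat] S'S okb bS dis adj.
rewrite /odd_model /= okb ok bS compat !andbT /=; apply/andP; split.
  by apply: sub_all sub => c /subset_trans; apply.
have disc : all (fun c => [disjoint bag_verts b & bag_verts c]) s.
  by apply: sub_all sub => c /disjointWr; apply.
case: b {okb bS dis} adj disc => [v adj | x z y _] disc; last first.
  by apply: sub_all disc => c; rewrite /bags_compatible andbT.
have : all (e v) (singles s) by apply/allP.
rewrite all_pmap => adjs; move: (conj disc adjs) => /andP; rewrite -all_predI.
by apply: sub_all => -[w | ? ? ?] /andP[/= ? ?]; apply/andP.
Qed.

Definition colorable_on (S : {set T}) (k : nat) : Prop :=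
  exists col : T -> nat,
    {in S, forall x, col x < k} /\ {in S &, forall x y, e x y -> col x != col y}.

Lemma colorable_onS (S S' : {set T}) k : S' \subset S -> colorable_on S k -> colorable_on S' k.
Proof.
move=> /subsetP S'S [col [col_lt col_ok]].
by exists col; split=> [x /S'S | x y /S'S xS /S'S yS]; [apply: col_lt | apply: col_ok].
Qed.

Lemma colorable_onU (S C : {set T}) k :
  colorable_on S k -> independent e C -> colorable_on (C :|: S) k.+1.
Proof.
move=> [col [col_lt col_ok]] /forall_inP indC.
exists (fun x => if x \in S then col x else k); split=> [x _ | x y].
  by case: ifP => [/col_lt/ltnW | _].
rewrite !inE; case: ifP => xS; case: ifP => yS; rewrite ?orbF => xC yC exy.
- exact: col_ok.
- by rewrite neq_ltn col_lt.
- by rewrite neq_ltn col_lt ?orbT.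
- by move: exy; rewrite (negbTE (forall_inP (indC x xC) y yC)).
Qed.

Lemma independent1 v : independent e [set v].
Proof. by apply/forall_inP=> _ /set1P->; apply/forall_inP=> _ /set1P->; rewrite e_irr. Qed.

Lemma independent2 x y : ~~ e x y -> independent e [set x; y].
Proof.
move=> nxy; apply/forall_inP=> u; rewrite !inE => /orP[]/eqP->;
  by apply/forall_inP=> w; rewrite !inE => /orP[]/eqP->; rewrite ?e_irr // e_sym.
Qed.

Lemma colorable_onT k : colorable_on [set: T] k -> colorable e k.
Proof.
move=> [col [col_lt col_ok]]; exists (fun x => Ordinal (col_lt x (in_setT x))).
by move=> x y exy; apply/eqP=> -[]; apply/eqP/col_ok; rewrite ?in_setT.
Qed.

Lemma chi_le_colorable k : colorable e k -> chi e <= k.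
Proof.
(* [chi] matches dependently on [boolP], which [case:] cannot abstract. *)
move=> [c c_ok]; rewrite /chi; destruct (boolP [forall x, ~~ e x x]) as [irr|]; last by [].
case: ex_minnP => m _; apply; apply/existsP; exists (finfun c).
by apply/forallP=> x; apply/forallP=> y; apply/implyP=> /c_ok; rewrite !ffunE.
Qed.

Definition has_balanced_model (S : {set T}) : Prop :=
  exists s k, [/\ odd_model S s, colorable_on S k & 2 * k <= 3 * size s + 1].

Definition reducible (S : {set T}) : Prop :=
  exists W : {set T}, [/\ W \subset S, W != set0 &
    (has_balanced_model (S :\: W) -> has_balanced_model S)].

Definition dominates (S : {set T}) (v : T) : Prop := {in S, forall w, w != v -> e v w}.

Lemma dominating_reducible (S : {set T}) v : v \in S -> dominates S v -> reducible S.
Proof.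
move=> vS vdom; exists [set v]; split; first by rewrite sub1set.
  by apply/set0Pn; exists v; rewrite inE.
move=> [s [k [ms ck bound]]]; exists (Vertex v :: s), k.+1; split; last by rewrite /=; lia.
- apply: (odd_model_cons ms (subsetDl _ _)) => //; first by rewrite sub1set.
    by rewrite disjoints1 !inE eqxx.
  by move=> w /(singles_sub ms); rewrite !inE => /andP[wv wS]; apply: vdom.
- by apply: colorable_onS (colorable_onU ck (independent1 v)); rewrite -subDset.
Qed.

Lemma two_cherries_reducible (S : {set T}) x1 z1 y1 x2 z2 y2 :
  cherry x1 z1 y1 -> cherry x2 z2 y2 ->
  [set x1; z1; y1] :|: [set x2; z2; y2] \subset S ->
  [disjoint [set x1; z1; y1] & [set x2; z2; y2]] -> ~~ e z1 z2 -> reducible S.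
Proof.
set C1 := [set x1; z1; y1]; set C2 := [set x2; z2; y2].
move=> c1 c2 CS dis nz; exists (C1 :|: C2); split=> //.
  by apply/set0Pn; exists x1; rewrite !inE eqxx.
move=> [s [k [ms ck bound]]]; set S' := S :\: (C1 :|: C2).
have [C1S C2S] : C1 \subset S /\ C2 \subset S by apply/andP; rewrite -subUset.
have m2 : odd_model (C2 :|: S') (Cherry x2 z2 y2 :: s).
  apply: (odd_model_cons ms (subsetUr _ _)) => //; first exact: subsetUl.
  exact: disjoint_setD (subsetUr _ _).
exists (Cherry x1 z1 y1 :: Cherry x2 z2 y2 :: s), k.+3; split; last by rewrite /=; lia.
- apply: (odd_model_cons m2) => //; first by rewrite subUset C2S subsetDl.
  by rewrite disjointsU dis disjoint_setD // subsetUl.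
- case/and4P: c1 c2 => _ _ n1 _ /and4P[_ _ n2 _].
  have := colorable_onU (colorable_onU (colorable_onU ck (independent2 n1))
    (independent2 n2)) (independent2 nz).
  apply: colorable_onS; apply/subsetP=> u uS; rewrite !inE uS andbT.
  by do !case: (_ == _).
Qed.

Lemma cherry_dominating_reducible (S : {set T}) x z y u :
  cherry x z y -> [set x; z; y] \subset S -> u \in S :\: [set x; z; y] ->
  dominates (S :\: [set x; z; y]) u -> reducible S.
Proof.
set C := [set x; z; y]; move=> xzy CS /setDP[uS uC] udom.
exists (u |: C); split; first by rewrite subUset sub1set uS.
  by apply/set0Pn; exists u; rewrite !inE eqxx.
move=> [s [k [ms ck bound]]]; set S' := S :\: (u |: C).
have m1 : odd_model (C :|: S') (Cherry x z y :: s).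
  apply: (odd_model_cons ms (subsetUr _ _)) => //; first exact: subsetUl.
  exact: disjoint_setD (subsetUr _ _).
exists (Vertex u :: Cherry x z y :: s), k.+3; split; last by rewrite /=; lia.
- apply: (odd_model_cons m1) => //.
  + by rewrite subUset CS subsetDl.
  + by rewrite sub1set uS.
  + by rewrite disjoints1 in_setU (negbTE uC) /= !inE eqxx.
  move=> w /(singles_sub ms)/setDP[wS]; rewrite in_setU1 negb_or => /andP[wu wC].
  by apply: udom; rewrite // in_setD wC.
- case/and4P: xzy => _ _ nxy _.
  have := colorable_onU (colorable_onU (colorable_onU ck (independent2 nxy))
    (independent1 z)) (independent1 u).
  apply: colorable_onS; apply/subsetP=> w wS; rewrite !inE wS andbT.
  by do !case: (_ == _).
Qed.

Definition nonnbhd (S : {set T}) (v : T) : {set T} := [set w in S | (w != v) && ~~ e v w].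

Lemma nonnbhdP (S : {set T}) v w : reflect [/\ w \in S, w != v & ~~ e v w] (w \in nonnbhd S v).
Proof. by rewrite inE; apply: (iffP and3P). Qed.

Lemma adj_neq x y w : e x y -> ~~ e x w -> y != w.
Proof. by move=> exy; apply: contraNneq => <-. Qed.

Lemma nonnbhd_adj (S : {set T}) v w : e v w -> w \notin nonnbhd S v.
Proof. by move=> evw; apply/negP=> /nonnbhdP[_ _]; rewrite evw. Qed.

Lemma nonnbhdN (S : {set T}) v w : w \in S -> w != v -> w \notin nonnbhd S v -> e v w.
Proof. by move=> wS wv; apply: contraNT => nvw; apply/nonnbhdP. Qed.

Hypothesis alpha_e : alpha e <= 2.

Lemma alpha2_adj x y w :
  x != y -> y != w -> x != w -> ~~ e x y -> ~~ e y w -> e x w.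
Proof.
move=> xy yw xw nxy nyw; apply/negPn/negP=> nxw.
have indep : independent e [set x; y; w].
  apply/forall_inP=> u uS; apply/forall_inP=> v vS.
  by move: uS vS; rewrite !inE => /orP[/orP[]|]/eqP-> /orP[/orP[]|]/eqP->; rewrite ?e_irr // e_sym.
have := leq_trans (@leq_bigmax_cond _ _ (fun S : {set T} => #|S|) _ indep) alpha_e.
by rewrite cards3.
Qed.

Lemma cherry_odd_edge b x z y :
  bag_ok b -> cherry x z y -> [disjoint bag_verts b & [set x; z; y]] ->
  exists u w, [/\ u \in bag_verts b, w \in [set x; z; y], e u w
                & bag_colour b u = bag_colour (Cherry x z y) w].
Proof.
move=> okb xzy dis; have [xz yz xy] := cherry_neq xzy.
suff end_adj u : u \notin [set x; z; y] -> exists2 w, w \in [set x; y] & e u w.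
  have end_colour w : w \in [set x; y] -> (w \in [set x; z; y]) && (w != z).
    by rewrite !inE => /orP[]/eqP->; rewrite eqxx ?orbT.
  case: b okb dis => [v _ | x' z' y' /cherry_neq[x'z' _ _]] dis.
    have [|w /end_colour/andP[wV wz] vw] := end_adj v; first by rewrite -disjoints1.
    by exists v, w; rewrite inE eqxx /= (negbTE wz).
  have x'V : x' \in [set x'; z'; y'] by rewrite !inE eqxx.
  have [|w /end_colour/andP[wV wz] x'w] := end_adj x'; first by rewrite (disjointFr dis).
  by exists x', w; rewrite /= (negbTE wz) (negbTE x'z').
rewrite !inE !negb_or => /andP[/andP[ux _] uy].
case/and4P: xzy => _ _ nxy _.
case ex: (e u x); first by exists x; rewrite ?inE ?eqxx.
case ey: (e u y); first by exists y; rewrite ?inE ?eqxx ?orbT.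
suff: e x y by rewrite (negbTE nxy).
by apply: (alpha2_adj (y := u)); rewrite ?ey // 1?eq_sym // e_sym ex.
Qed.

Lemma bags_odd_edge b b' :
  bag_ok b -> bag_ok b' -> bags_compatible b b' ->
  exists u w, [/\ u \in bag_verts b, w \in bag_verts b', e u w
                & bag_colour b u = bag_colour b' w].
Proof.
move=> okb okb' /andP[dis adj].
case: b' okb' dis adj => [w _ | x z y xzy] dis adj; last exact: cherry_odd_edge.
case: b okb dis adj => [v _ _ vw | x z y xzy dis _].
  by exists v, w; rewrite !inE !eqxx.
rewrite disjoint_sym in dis.
have [u [v [uw vV uv cuv]]] := cherry_odd_edge (isT : bag_ok (Vertex w)) xzy dis.
by exists v, u; rewrite -cuv e_sym.
Qed.

Lemma odd_model_minor (S : {set T}) s : odd_model S s -> has_odd_minor e (size s).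
Proof.
case/and3P=> /(all_tnthP (t := in_tuple s)) ok _ compat; pose B := tnth (in_tuple s).
have compat_lt (i j : 'I_(size s)) : i < j -> bags_compatible (B i) (B j).
  by move=> ij; rewrite /B !(tnth_nth (B i)); apply: (pairwiseP _ compat) => //; apply: ltn_ord.
have compatB i j : i != j -> bags_compatible (B i) (B j).
  by rewrite neq_ltn => /orP[/compat_lt // | /compat_lt]; rewrite bags_compatibleC.
exists (bag_verts \o B), (bag_edge \o B), (bag_colour \o B).
split=> [i | i j /compatB/andP[] | i x y | i j /compatB] //=.
- exact: bag_tree.
- exact: bag_colour_proper.
- exact: bags_odd_edge.
Qed.

Lemma has_odd_minor_leq t t' : t' <= t -> has_odd_minor e t -> has_odd_minor e t'.
Proof.
move=> le [V [F [col [tree dis proper odd]]]]; pose w := widen_ord le.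
have w_neq i j : i != j -> w i != w j by apply: contra => /eqP[/val_inj->].
exists (V \o w), (F \o w), (col \o w).
by split=> [i | i j /w_neq | i | i j /w_neq] /=;
  [apply: tree | apply: dis | apply: proper | apply: odd].
Qed.

Lemma splitting_pair_clique (S : {set T}) d c (K : seq T) :
  c \in nonnbhd S d ->
  {in nonnbhd S d :\ c & nonnbhd S c :\ d, forall a b, ~~ e a b} ->
  {in K &, forall v w, v != w -> e v w} -> {subset K <= S :\: [set d; c]} ->
  {in K, forall w, e d w} \/ {in K, forall w, e c w}.
Proof.
move=> /nonnbhdP[_ cd ndc] split clique KS.
have inK w : w \in K -> [/\ w \in S, w != d & w != c].
  by move/KS; rewrite !inE negb_or => /andP[/andP[]].
have [/allP | /allPn[w1 w1K nw1]] := boolP (all (e d) K); [by left | right=> w2 w2K].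
apply/negPn/negP=> nw2; have [w1S w1d w1c] := inK _ w1K; have [w2S w2d w2c] := inK _ w2K.
have : ~~ e w1 w2.
  by apply: split; apply/setD1P; split=> //; apply/nonnbhdP.
have [w12|w12] := eqVneq w1 w2; last by rewrite clique.
rewrite -w12 in nw2.
have : e d c by apply: (alpha2_adj (y := w1)); rewrite // 1?eq_sym // e_sym.
by rewrite (negbTE ndc).
Qed.

Lemma splitting_pair_reducible (S : {set T}) d c :
  d \in S -> c \in nonnbhd S d ->
  {in nonnbhd S d :\ c & nonnbhd S c :\ d, forall a b, ~~ e a b} -> reducible S.
Proof.
move=> dS cN split; have /nonnbhdP[cS _ ndc] := cN.
have dcS : [set d; c] \subset S by rewrite subUset !sub1set dS cS.
exists [set d; c]; split=> //; first by apply/set0Pn; exists d; rewrite !inE eqxx.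
move=> [s [k [ms ck bound]]].
have [v vdc vadj] : exists2 v, v \in [set d; c] & {in singles s, forall w, e v w}.
  have [] := splitting_pair_clique cN split (singles_clique ms) (singles_sub ms).
    by exists d; rewrite // !inE eqxx.
  by exists c; rewrite // !inE eqxx orbT.
exists (Vertex v :: s), k.+1; split; last by rewrite /=; lia.
- apply: (odd_model_cons ms (subsetDl _ _)) => //; first by rewrite sub1set (subsetP dcS).
  by rewrite disjoints1 in_setD vdc.
- by apply: colorable_onS (colorable_onU ck (independent2 ndc)); rewrite -subDset.
Qed.

Section CrossingNonEdges.
(* z, z' as in the induction step, and an edge ab witnessing that the
   non-neighbourhoods of z and z' are not anticomplete. *)
Variables (S : {set T}) (z z' a b : T).
Hypotheses (zS : z \in S) (z'N : z' \in nonnbhd S z).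
Hypotheses (aN : a \in nonnbhd S z :\ z') (bN : b \in nonnbhd S z' :\ z) (eab : e a b).

Lemma crossing_adj : e z b /\ e z' a.
Proof.
have [_ z'z nzz'] := nonnbhdP _ _ _ z'N.
have [az' /nonnbhdP[_ az nza]] := setD1P aN.
have [bz /nonnbhdP[_ bz' nz'b]] := setD1P bN.
by split; [apply: (alpha2_adj (y := z')) | apply: (alpha2_adj (y := z))];
  rewrite // 1?eq_sym // e_sym.
Qed.

Lemma crossing_cherry_dominating p :
  p \in nonnbhd S a -> e z' p -> nonnbhd S z \subset [set z'; a] -> reducible S.
Proof.
move=> /nonnbhdP[pS pa nap] z'p zN.
have [z'S z'z nzz'] := nonnbhdP _ _ _ z'N.
have [_ /nonnbhdP[aS az _]] := setD1P aN.
have [_ z'a] := crossing_adj.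
have zp : z != p by rewrite eq_sym (adj_neq z'p) // e_sym.
apply: (@cherry_dominating_reducible _ a z' p z).
- by rewrite /cherry z'a z'p nap eq_sym pa.
- exact: sub_set3.
- by rewrite in_setD zS !inE !negb_or (eq_sym z) az (eq_sym z) z'z zp.
move=> w /setDP[wS]; rewrite !inE !negb_or => /andP[/andP[wa wz'] _] wz.
apply: (nonnbhdN wS wz); apply: contraNN wa => /(subsetP zN).
by rewrite !inE (negbTE wz') => /eqP->.
Qed.

Lemma crossing_private_two_cherries p q :
  p \in nonnbhd S a -> e z' p ->
  q \in nonnbhd S b :\: nonnbhd S z -> q != p -> reducible S.
Proof.
move=> /nonnbhdP[pS pa nap] z'p /setDP[/nonnbhdP[qS qb nbq] qNz] qp.
have [z'S z'z nzz'] := nonnbhdP _ _ _ z'N.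
have [_ /nonnbhdP[aS az _]] := setD1P aN.
have [_ /nonnbhdP[bS bz' _]] := setD1P bN.
have [zb z'a] := crossing_adj.
have zq : e z q by apply: (nonnbhdN qS) => //; rewrite eq_sym (adj_neq _ nbq) // e_sym.
have ba : b != a by rewrite (adj_neq eab) ?e_irr.
have bp : b != p := adj_neq eab nap.
have pz : p != z by rewrite (adj_neq z'p) // e_sym.
have aq : a != q by rewrite (adj_neq _ nbq) // e_sym.
have qz' : q != z' := adj_neq zq nzz'.
apply: (@two_cherries_reducible _ b z q a z' p) => //.
- by rewrite /cherry zb zq nbq eq_sym qb.
- by rewrite /cherry z'a z'p nap eq_sym pa.
- by rewrite subUset !sub_set3.
by rewrite disjoint_set3 !inE !negb_or -!andbA; do !(apply/andP; split); rewrite // eq_sym.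
Qed.

Hypothesis z_min : {in S, forall v, #|nonnbhd S z| <= #|nonnbhd S v|}.
Hypothesis z'_min : {in nonnbhd S z, forall v, #|nonnbhd S z'| <= #|nonnbhd S v|}.

Section UniquePrivateNonNeighbour.
Variable p : T.
Hypotheses (pN : p \in nonnbhd S a) (z'p : e z' p).
Hypothesis private_p : nonnbhd S b :\: nonnbhd S z \subset [set p].

Lemma crossing_private_p : p \in nonnbhd S b /\ e z p.
Proof.
have [_ /nonnbhdP[bS _ _]] := setD1P bN.
have [_ aNz] := setD1P aN.
have : 0 < #|nonnbhd S b :\: nonnbhd S z|.
  apply: leq_trans (leq_card_setD (z_min bS)); rewrite card_gt0.
  by apply/set0Pn; exists a; rewrite in_setD aNz nonnbhd_adj // e_sym.
case/card_gt0P=> _ /[dup] /(subsetP private_p)/set1P-> /setDP[pNb pNz].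
split=> //; have [pS _ nbp] := nonnbhdP _ _ _ pNb.
by apply: (nonnbhdN pS) => //; rewrite eq_sym (adj_neq _ nbp) // e_sym; case: crossing_adj.
Qed.

Lemma crossing_third_two_cherries x : x \in nonnbhd S z :\: [set z'; a] -> reducible S.
Proof.
move=> /setDP[xNz]; rewrite !inE negb_or => /andP[xz' xa].
have [xS xz nzx] := nonnbhdP _ _ _ xNz.
have [z'S z'z nzz'] := nonnbhdP _ _ _ z'N.
have [az' aNz] := setD1P aN; have [aS az nza] := nonnbhdP _ _ _ aNz.
have [bz /nonnbhdP[bS bz' _]] := setD1P bN.
have [pS pa nap] := nonnbhdP _ _ _ pN.
have [_ zp] := crossing_private_p.
(* Otherwise a and x are non-neighbours of z adjacent to b, whereas p is the
   only non-neighbour of b adjacent to z, against the minimality of z. *)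
have xNb : x \in nonnbhd S b.
  apply/negPn/negP=> xNb.
  have two : #|[set a; x]| <= #|nonnbhd S z :\: nonnbhd S b|.
    apply: subset_leq_card.
    by rewrite subUset !sub1set !in_setD xNb aNz xNz nonnbhd_adj // e_sym.
  have one : #|nonnbhd S b :\: nonnbhd S z| <= #|[set p]| by apply: subset_leq_card.
  have := leq_trans two (leq_trans (leq_card_setD (z_min bS)) one).
  by rewrite cards1 cards2 eq_sym xa.
have [_ xb nbx] := nonnbhdP _ _ _ xNb.
have eax : e a x by apply: (alpha2_adj (y := z)); rewrite // 1?eq_sym // e_sym.
have bp : b != p := adj_neq eab nap.
have xp : x != p by rewrite eq_sym (adj_neq zp).
apply: (@two_cherries_reducible _ b a x z p z') => //.
- by rewrite /cherry eab eax nbx eq_sym xb.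
- by rewrite /cherry e_sym zp e_sym z'p nzz' eq_sym z'z.
- by rewrite subUset !sub_set3.
by rewrite disjoint_set3 !inE !negb_or -!andbA; do !(apply/andP; split); rewrite // eq_sym.
Qed.

End UniquePrivateNonNeighbour.

Lemma crossing_reducible : reducible S.
Proof.
have [_ aNz] := setD1P aN; have [_ z'b] := crossing_adj.
have [_ bNz'] := setD1P bN.
have : 0 < #|nonnbhd S a :\: nonnbhd S z'|.
  apply: leq_trans (leq_card_setD (z'_min aNz)); rewrite card_gt0.
  by apply/set0Pn; exists b; rewrite in_setD bNz' nonnbhd_adj.
(* b is a non-neighbour of z' but not of a, so by minimality of z' some
   non-neighbour p of a is not one of z', i.e. is adjacent to z'. *)
case/card_gt0P=> p /setDP[pNa pNz']; have [pS _ nap] := nonnbhdP _ _ _ pNa.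
have z'p : e z' p.
  by apply: (nonnbhdN pS) => //; rewrite eq_sym (adj_neq _ nap) // e_sym.
have [private_p | /subsetPn[q qN qp]] :=
  boolP (nonnbhd S b :\: nonnbhd S z \subset [set p]).
  have [zN | /subsetPn[x xNz xz'a]] := boolP (nonnbhd S z \subset [set z'; a]).
    exact: (crossing_cherry_dominating pNa).
  by apply: (crossing_third_two_cherries pNa z'p private_p (x := x)); rewrite in_setD xz'a.
by apply: (crossing_private_two_cherries pNa z'p qN); apply: contraNneq qp => ->; rewrite inE.
Qed.

End CrossingNonEdges.

Lemma nonempty_reducible (S : {set T}) : S != set0 -> reducible S.
Proof.
case/set0Pn=> v0 v0S.
have [z zS z_min] := arg_minnP (fun v => #|nonnbhd S v|) v0S.
have [zN0 | /set0Pn[z'0 z'0N]] := eqVneq (nonnbhd S z) set0.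
  by apply: (dominating_reducible zS) => w wS wz; apply: (nonnbhdN wS wz); rewrite zN0 inE.
have [z' z'N z'_min] := arg_minnP (fun v => #|nonnbhd S v|) z'0N.
have [split | ] :=
  boolP [forall a in nonnbhd S z :\ z', forall b in nonnbhd S z' :\ z, ~~ e a b].
  apply: (splitting_pair_reducible zS z'N) => a b aN bN.
  exact: (forall_inP (forall_inP split a aN) b bN).
case/forall_inPn=> a aN /forall_inPn[b bN /negPn eab].
exact: (crossing_reducible zS z'N aN bN eab z_min z'_min).
Qed.

Lemma has_balanced_model_all (S : {set T}) : has_balanced_model S.
Proof.
elim: {S}_.+1 {-2}S (ltnSn #|S|) => // n IH S ltSn.
have [-> | S0] := eqVneq S set0.
  by exists [::], 0; split=> //; exists (fun _ => 0); split=> x; rewrite inE.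
have [W [WS W0 red]] := nonempty_reducible S0; apply/red/IH.
move: W0; rewrite -card_gt0 cardsDS // => W0; have := subset_leq_card WS; lia.
Qed.

End OddCliqueModels.

Theorem proposition1p5 (t : nat) (T : finType) (e : rel T) :
  0 < t -> simple_graph e -> alpha e <= 2 -> ~ has_odd_minor e t ->
  chi e <= (3 * (t - 1)).+1 %/ 2.
Proof.
move=> _ [e_sym e_irr] alpha_e no_minor.
have [s [k [ms ck bound]]] := has_balanced_model_all e_sym e_irr alpha_e [set: T].
have st : size s < t.
  rewrite ltnNge; apply/negP=> ts; apply: no_minor.
  exact: has_odd_minor_leq ts (odd_model_minor e_sym e_irr alpha_e ms).
apply: leq_trans (chi_le_colorable (colorable_onT ck)) _.
by rewrite leq_divRL //; lia.
Qed.
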